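(* Let $(V,w,\mu)$ be a simple weighted graph and let $\mathcal V:V\to[0,\infty)$. Then \[\mathcal F^{\mathcal V}=\mathcal F\cap L^2(V,\mathcal V\cdot\mu).\]
   Context: A simple weighted graph $(V,w,\mu)$ consists of a countably infinite set $V$, a symmetric function $w:V\times V\to[0,\infty)$ and a function $\mu:V\to(0,\infty)$. The graph with edges $\{x\sim y:w(x,y)>0\}$ is assumed to be locally finite, connected, and without loops or multiple edges. $C_c(V)$ denotes the finitely supported functions. For a potential $\mathcal V\ge0$, define on $C_c(V)$ \[\mathcal E^{\mathcal V}(u,u)=\frac12\sum_{x,y\in V}w(x,y)(u(x)-u(y))^2+\sum_{x}\mathcal V(x)u(x)^2\mu(x).\] Let $\mathcal F^{\mathcal V}$ be the closure of $C_c(V)$ with respect to the norm $\big(\mathcal E^{\mathcal V}(u,u)+\|u\|^2_{L^2(V,\mu)}\big)^{1/2}$, taken inside the space of $u\in L^2(V,\mu)$ for which that expression is finite. Set $\mathcal F=\mathcal F^{0}$. The measure $\mathcal V\cdot\mu$ is given by $x\mapsto\mathcal V(x)\mu(x)$. *)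

From HB Require Import structures.
From mathcomp Require Import all_boot all_order all_algebra.
From mathcomp Require Import all_classical all_reals.
From mathcomp Require Import ereal topology normedtype sequences esum.
From Stdlib Require Import Relations.
Set Implicit Arguments. Unset Strict Implicit. Unset Printing Implicit Defensive.
Import Order.TTheory GRing.Theory Num.Theory.
Local Open Scope classical_set_scope.
Local Open Scope ring_scope.

Section Graphs.
Context {R : realType} {V : countType}.

Definition simple_weighted_graph (w : V -> V -> R) (mu : V -> R) : Prop :=
  infinite_set [set: V] /\
  (forall x y, w x y = w y x) /\
  (forall x y, 0 <= w x y) /\
  (forall x, 0 < mu x) /\
  (forall x, finite_set [set y | 0 < w x y]) /\
  (forall x y, clos_refl_trans V (fun a b => 0 < w a b) x y) /\
  (forall x, w x x = 0).

Definition Cc (u : V -> R) : Prop := finite_set [set x | u x != 0].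

Definition energy (w : V -> V -> R) (mu Pot : V -> R) (u : V -> R) : \bar R :=
  ((2%:R^-1)%:E * \esum_(p in [set: V * V])
       (w p.1 p.2 * (u p.1 - u p.2) ^+ 2)%:E
   + \esum_(x in [set: V]) (Pot x * u x ^+ 2 * mu x)%:E)%E.

Definition L2norm2 (m : V -> R) (u : V -> R) : \bar R :=
  \esum_(x in [set: V]) (u x ^+ 2 * m x)%:E.

Definition in_L2 (m : V -> R) (u : V -> R) : Prop := (L2norm2 m u < +oo)%E.

Definition form_norm2 (w : V -> V -> R) (mu Pot : V -> R) (u : V -> R) : \bar R :=
  (energy w mu Pot u + L2norm2 mu u)%E.

(* F^Pot: closure of C_c(V) w.r.t. the form norm, inside the space of
   u in L^2(V,mu) with finite form norm (closure = sequential closure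
   in this normed space). *)
Definition formF (w : V -> V -> R) (mu Pot : V -> R) (u : V -> R) : Prop :=
  in_L2 mu u /\ (energy w mu Pot u < +oo)%E /\
  exists phi : nat -> V -> R, (forall n, Cc (phi n)) /\
    (fun n => form_norm2 w mu Pot (u \- phi n)) @ \oo --> (0%R)%:E.

End Graphs.

From HB Require Import structures.
From mathcomp Require Import all_boot all_order all_algebra.
From mathcomp Require Import all_classical all_reals.
From mathcomp Require Import ereal topology normedtype sequences esum.
From mathcomp Require Import finmap lra.
Import Order.TTheory GRing.Theory Num.Theory.
Import numFieldNormedType.Exports.
Local Open Scope classical_set_scope.
Local Open Scope ring_scope.
Set Implicit Arguments. Unset Strict Implicit. Unset Printing Implicit Defensive.

(* Only the density of C_c(V) in F ∩ L^2(V·mu) for the norm of F^V needs an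
   argument, the norm of F^V dominating that of F.  Let u lie in that space and
   phi_n in C_c(V) converge to u in F.  Clamp the errors at level |u|:
   g_n := clamp_{|u|}(u - phi_n).  Where phi_n vanishes the clamp is inactive,
   so u - g_n is finitely supported.  The g_n tend to 0 in L^2(mu), hence
   pointwise, and are dominated: g_n^2 <= u^2 and
   (grad g_n)^2 <= 2 (grad u)^2 + 2 (grad (u - phi_n))^2.  As u has finite
   energy and finite L^2(V·mu) norm, a finite set carries all but epsilon of the
   dominating sums, and on it pointwise convergence suffices: g_n -> 0 in the
   norm of F^V. *)

Section esum_complements.
Context {R : realType} {T : choiceType}.
Local Open Scope ereal_scope.

Lemma esumZl (S : set T) (k : R) (a : T -> \bar R) :
  (0 <= k)%R -> (forall x, 0 <= a x) ->
  \esum_(i in S) (k%:E * a i) = k%:E * \esum_(i in S) a i.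
Proof.
move=> k0 a0; rewrite /esum -ereal_supZl//; last first.
  by apply/set0P; exists (\sum_(x \in set0) a x); exists set0 => //; exact: fsets_set0.
congr ereal_sup; apply/seteqP; split => x /=.
- move=> [A [fA AS] <-]; exists (\sum_(x \in A) a x); first by exists A.
  by rewrite !fsbig_finite// ge0_sume_distrr.
- move=> [y [A [fA AS] <-] <-]; exists A => //.
  by rewrite !fsbig_finite// ge0_sume_distrr.
Qed.

Lemma le_esum_subset (A B : set T) (a : T -> \bar R) :
  A `<=` B -> (forall x, B x -> 0 <= a x) ->
  \esum_(i in A) a i <= \esum_(i in B) a i.
Proof.
move=> AB a0; rewrite (esumID A B a a0) setIidr// leeDl//.
by apply: esum_ge0 => x [/a0].
Qed.

Lemma esum_tail (a : T -> \bar R) (tau : R) :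
  (forall x, 0 <= a x) -> \esum_(i in [set: T]) a i < +oo -> (0 < tau)%R ->
  exists2 F : set T, finite_set F & \esum_(i in ~` F) a i <= tau%:E.
Proof.
move=> a0 afin tau0.
have [S eS] : exists S : R, \esum_(i in [set: T]) a i = S%:E.
  by exists (fine (\esum_(i in [set: T]) a i)); rewrite fineK// ge0_fin_numE// esum_ge0.
have : (S - tau)%:E < \esum_(i in [set: T]) a i by rewrite eS lte_fin gtrBl.
move=> /ereal_sup_gt [_ [X [finX _] <-] ltX]; exists X => //.
have := esumID X [set: T] a (fun i _ => a0 i); rewrite !setTI eS.
have ltX' : (S - tau)%:E < \esum_(i in X) a i.
  by apply: (lt_le_trans ltX); apply: esum_ge; exists X => //; exact: fsets_self.
have : 0 <= \esum_(i in ~` X) a i by apply: esum_ge0.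
move: ltX'; case: (\esum_(i in X) a i) => [s||];
  case: (\esum_(i in ~` X) a i) => [t||] //= lts _ /eqP.
rewrite -EFinD eqe lte_fin lee_fin in lts * => /eqP eS'; lra.
Qed.

End esum_complements.

Section nonnegative_limits.
Context {R : realType} {T : Type} (F : set_system T) {FF : Filter F}.
Local Open Scope ereal_scope.

Lemma nng_cvge0P (x : T -> \bar R) : (forall t, 0 <= x t) ->
  x @ F --> 0%:E <-> forall e : R, (0 < e)%R -> \forall t \near F, x t <= e%:E.
Proof.
move=> x0; split.
- move=> /fine_cvgP [xfin /cvgr0Pnorm_le xcvg] e e0.
  near=> t; rewrite -(@fineK _ (x t)); last by near: t.
  by rewrite lee_fin (le_trans (ler_norm _))//; near: t; exact: xcvg.
- move=> xe; apply/fine_cvgP; split.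
    by apply: filterS (xe 1%R ltr01) => t xt1; rewrite ge0_fin_numE// (le_lt_trans xt1)// ltry.
  apply/cvgr0Pnorm_le => e e0; apply: filterS (xe e e0) => t xte /=.
  by rewrite ger0_norm ?fine_ge0// -lee_fin fineK// ge0_fin_numE// (le_lt_trans xte)// ltry.
Unshelve. all: by end_near.
Qed.

End nonnegative_limits.

Section weighted_l2.
Context {R : realType} {I : countType} (m : I -> R).
Hypothesis m_ge0 : forall i, 0 <= m i.

Let term_ge0 (p : I -> R) i : (0 <= (p i ^+ 2 * m i)%:E)%E.
Proof. by rewrite lee_fin mulr_ge0 ?sqr_ge0. Qed.

Lemma L2norm2_ge0 (p : I -> R) : (0 <= L2norm2 m p)%E.
Proof. by apply: esum_ge0 => i _; exact: term_ge0. Qed.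

Lemma L2norm2_ge_term (p : I -> R) i : ((p i ^+ 2 * m i)%:E <= L2norm2 m p)%E.
Proof.
rewrite -(@esum_set1 _ _ i (fun j => (p j ^+ 2 * m j)%:E))//.
by apply: le_esum_subset => // j _; exact: term_ge0.
Qed.

Lemma L2norm2_cst0 : L2norm2 m (fun=> 0) = 0%E.
Proof. by apply: esum1 => i _; rewrite expr0n mul0r. Qed.

Lemma L2norm2_cvg0_pointwise (q : nat -> I -> R) i : 0 < m i ->
  (fun n => L2norm2 m (q n)) @ \oo --> 0%:E -> q^~ i @ \oo --> 0.
Proof.
move=> mi_gt0 /(nng_cvge0P (fun n => L2norm2_ge0 (q n))) qcvg.
apply/cvgr0Pnorm_le => e e0.
apply: filterS (qcvg _ (mulr_gt0 (exprn_gt0 2 e0) mi_gt0)) => n qn.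
have := le_trans (L2norm2_ge_term (q n) i) qn; rewrite lee_fin ler_pM2r//.
rewrite -[q n i ^+ 2]real_normK ?num_real// => qe; have := normr_ge0 (q n i); nra.
Qed.

Lemma L2norm2_fset_cvg0 (F : set I) (q : nat -> I -> R) : finite_set F ->
  (forall i, q^~ i @ \oo --> 0) ->
  (fun n => \esum_(i in F) (q n i ^+ 2 * m i)%:E) @ \oo --> 0%:E.
Proof.
move=> finF qcvg.
have -> : (fun n => \esum_(i in F) (q n i ^+ 2 * m i)%:E) =
    fun n => \sum_(i <- fset_set F) (q n i ^+ 2 * m i)%:E.
  by apply/funext => n; rewrite esum_fset ?fsbig_finite// => i _; exact: term_ge0.
have := cvg_nnesum (r := fset_set F) (f := fun i n => (q n i ^+ 2 * m i)%:E)
  (l := fun=> 0%E) (P := xpredT) (fun i _ => nearW _ (fun n => term_ge0 (q n) i)).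
rewrite big1_eq; apply => j _; apply/fine_cvgP; split; first exact: nearW.
by have := cvgM (cvgM (qcvg j) (qcvg j)) (cvg_cst (m j)); rewrite !mul0r; exact.
Qed.

Lemma L2norm2_dominated_cvg0 (p : I -> R) (q s : nat -> I -> R) (k k' : R) :
  0 <= k -> 0 <= k' -> (L2norm2 m p < +oo)%E ->
  (fun n => L2norm2 m (s n)) @ \oo --> 0%:E ->
  (forall i, q^~ i @ \oo --> 0) ->
  (forall n i, q n i ^+ 2 * m i <= k * (p i ^+ 2 * m i) + k' * (s n i ^+ 2 * m i)) ->
  (fun n => L2norm2 m (q n)) @ \oo --> 0%:E.
Proof.
move=> k0 k'0 pfin /(nng_cvge0P (fun n => L2norm2_ge0 (s n))) scvg qcvg qle.
apply/(nng_cvge0P (fun n => L2norm2_ge0 (q n))) => e e0.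
have e3 : 0 < e / 3 by rewrite divr_gt0.
have tau_gt0 : 0 < e / 3 / (k + 1) by rewrite divr_gt0// ltr_wpDl.
have [F finF tailF] := esum_tail (a := fun i => (p i ^+ 2 * m i)%:E)
  (fun i => term_ge0 p i) pfin tau_gt0.
have frac_le a : 0 <= a -> a * (e / 3 / (a + 1)) <= e / 3.
  by move=> a0; rewrite mulrA ler_pdivrMr ?ltr_wpDl// mulrDr mulr1 mulrC lerDl ltW.
near=> n.
have Fbound : (\esum_(i in F) (q n i ^+ 2 * m i)%:E <= (e / 3)%:E)%E.
  near: n; apply: (nng_cvge0P (fun n => esum_ge0 (fun i _ => term_ge0 (q n) i))).1 => //.
  exact: L2norm2_fset_cvg0.
have sbound : (L2norm2 m (s n) <= (e / 3 / (k' + 1))%:E)%E.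
  by near: n; apply: scvg; rewrite divr_gt0// ltr_wpDl.
have tail_q : (\esum_(i in ~` F) (q n i ^+ 2 * m i)%:E <=
    k%:E * (\esum_(i in ~` F) (p i ^+ 2 * m i)%:E) + k'%:E * L2norm2 m (s n))%E.
  apply: le_trans (le_esum (b := fun i =>
    k%:E * (p i ^+ 2 * m i)%:E + k'%:E * (s n i ^+ 2 * m i)%:E)%E _) _.
    by move=> i _; rewrite -!EFinM -EFinD lee_fin.
  rewrite esumD ?esumZl// => [|i _|i _]; last 2 first.
  - exact: mule_ge0.
  - exact: mule_ge0.
  by rewrite leeD2l// lee_wpmul2l ?lee_fin// le_esum_subset.
rewrite /L2norm2 (esumID F) ?setTI; last by move=> i _; exact: term_ge0.
apply: le_trans (leeD Fbound tail_q) _.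
apply: le_trans (leeD (lexx _) (leeD (lee_wpmul2l _ tailF) (lee_wpmul2l _ sbound))) _;
  rewrite ?lee_fin//.
by have := frac_le _ k0; have := frac_le _ k'0; lra.
Unshelve. all: by end_near.
Qed.

End weighted_l2.

Section clamp.
Context {R : realType}.

Definition clamp (r v : R) : R := if v < - r then - r else if r < v then r else v.

Lemma clamp_id r v : `|v| <= r -> clamp r v = v.
Proof.
rewrite ler_norml /clamp => /andP[? ?].
by case: (ltrP v (- r)) => ?; case: (ltrP r v) => ?; lra.
Qed.

Lemma clamp_sqr_le r v : 0 <= r -> clamp r v ^+ 2 <= v ^+ 2.
Proof. by rewrite /clamp => r0; case: (ltrP v (- r)) => ?; case: (ltrP r v) => ?; nra. Qed.

Lemma clamp_sqr_le_bound r v : 0 <= r -> clamp r v ^+ 2 <= r ^+ 2.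
Proof. by rewrite /clamp => r0; case: (ltrP v (- r)) => ?; case: (ltrP r v) => ?; nra. Qed.

Lemma clamp_lipschitz r s v v' : 0 <= r -> 0 <= s ->
  `|clamp r v - clamp s v'| <= `|v - v'| + `|r - s|.
Proof.
move=> r0 s0; have := ler_norm (v - v'); have := ler_norm (v' - v).
have := ler_norm (r - s); have := ler_norm (s - r).
rewrite (distrC v') (distrC s) ler_norml /clamp => *.
case: (ltrP v (- r)) => ?; case: (ltrP r v) => ?;
  case: (ltrP v' (- s)) => ?; case: (ltrP s v') => ?; apply/andP; split; lra.
Qed.

Lemma clamp_sub_sqr_le a b v v' :
  (clamp `|a| v - clamp `|b| v') ^+ 2 <= 2 * (v - v') ^+ 2 + 2 * (a - b) ^+ 2.
Proof.
set d := clamp `|a| v - clamp `|b| v'.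
have d_le : `|d| <= `|v - v'| + `|a - b|.
  apply: le_trans (clamp_lipschitz v v' (normr_ge0 a) (normr_ge0 b)) _.
  by rewrite lerD2l ler_dist_dist.
have := ler_pM (normr_ge0 d) (normr_ge0 d) d_le d_le.
have := sqr_ge0 (`|v - v'| - `|a - b|).
rewrite -[d ^+ 2]real_normK ?num_real// -[(v - v') ^+ 2]real_normK ?num_real//.
by rewrite -[(a - b) ^+ 2]real_normK ?num_real//; nra.
Qed.

End clamp.

Section graph_forms.
Context {R : realType} {V : countType} (w : V -> V -> R) (mu : V -> R).
Hypotheses (w_ge0 : forall x y, 0 <= w x y) (mu_ge0 : forall x, 0 <= mu x).

Definition edge_weight : V * V -> R := fun e => w e.1 e.2.
Definition grad (f : V -> R) : V * V -> R := fun e => f e.1 - f e.2.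

Lemma edge_weight_ge0 e : 0 <= edge_weight e.
Proof. exact: w_ge0. Qed.

(* The [\esum] notation extends as far right as possible, so in [energy] the
   factor 1/2 multiplies the potential term as well. *)
Lemma energyE Pot f : energy w mu Pot f =
  ((2^-1)%:E * (L2norm2 edge_weight (grad f) + L2norm2 (fun x => Pot x * mu x)%R f))%E.
Proof.
congr (_ * (_ + _))%E; apply: eq_esum => x _; congr EFin; first exact: mulrC.
by rewrite mulrAC mulrC.
Qed.

Lemma form_norm2E Pot f : form_norm2 w mu Pot f =
  ((2^-1)%:E * (L2norm2 edge_weight (grad f) + L2norm2 (fun x => Pot x * mu x)%R f)
   + L2norm2 mu f)%E.
Proof. by rewrite /form_norm2 energyE. Qed.

Lemma L2norm2_zero_potential f : L2norm2 (fun x => 0 * mu x) f = 0%E.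
Proof. by apply: esum1 => x _; rewrite !mul0r mulr0. Qed.

Lemma energy_lty Pot f : (forall x, 0 <= Pot x) ->
  (energy w mu Pot f < +oo)%E <->
  (L2norm2 edge_weight (grad f) < +oo)%E /\ (L2norm2 (fun x => Pot x * mu x)%R f < +oo)%E.
Proof.
move=> Pot_ge0; rewrite energyE.
have := L2norm2_ge0 edge_weight_ge0 (grad f).
have := L2norm2_ge0 (fun x => mulr_ge0 (Pot_ge0 x) (mu_ge0 x)) f.
case: (L2norm2 _ f) => [a||]; case: (L2norm2 _ (grad f)) => [b||] //= _ _.
  by rewrite -EFinD -EFinM !ltry.
all: by rewrite ?addye ?addey// gt0_muley ?invr_gt0// ltxx; split=> // -[].
Qed.

Lemma form_norm2_ge0 Pot f : (forall x, 0 <= Pot x) -> (0 <= form_norm2 w mu Pot f)%E.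
Proof.
move=> Pot_ge0; rewrite form_norm2E adde_ge0 ?L2norm2_ge0// mule_ge0 ?lee_fin ?invr_ge0//.
by rewrite adde_ge0 ?L2norm2_ge0// => [e|x]; [exact: edge_weight_ge0 | rewrite mulr_ge0].
Qed.

Lemma form_norm2_le_potential Pot f : (forall x, 0 <= Pot x) ->
  (form_norm2 w mu (fun=> 0%R) f <= form_norm2 w mu Pot f)%E.
Proof.
move=> Pot_ge0; rewrite !form_norm2E L2norm2_zero_potential adde0.
apply: leeD => //; apply: lee_wpmul2l; first by rewrite lee_fin invr_ge0.
by rewrite leeDl// L2norm2_ge0// => x; rewrite mulr_ge0.
Qed.

End graph_forms.

Definition clamped_error {R : realType} {V : Type} (u : V -> R) (phi : nat -> V -> R)
  (n : nat) (x : V) : R := clamp `|u x| (u x - phi n x).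

Section clamped_approximation.
Context {R : realType} {V : countType} (w : V -> V -> R) (mu Pot : V -> R).
Hypotheses (w_ge0 : forall x y, 0 <= w x y) (mu_gt0 : forall x, 0 < mu x)
  (Pot_ge0 : forall x, 0 <= Pot x).
Variables (u : V -> R) (phi : nat -> V -> R).
Hypotheses (phi_Cc : forall n, Cc (phi n))
  (phi_cvg : (fun n => form_norm2 w mu (fun=> 0) (u \- phi n)) @ \oo --> 0%:E)
  (u_grad : (L2norm2 (edge_weight w) (grad u) < +oo)%E)
  (u_Pot : (L2norm2 (fun x => Pot x * mu x)%R u < +oo)%E).

Local Notation g := (clamped_error u phi).

Let mu_ge0 x : 0 <= mu x. Proof. exact/ltW. Qed.

Lemma Cc_sub_clamped_error n : Cc (u \- g n).
Proof.
apply: sub_finite_set (phi_Cc n) => x /=; apply: contra_neq => phi0.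
by rewrite /clamped_error phi0 subr0 clamp_id ?subrr.
Qed.

Let error_grad_cvg0 :
  (fun n => L2norm2 (edge_weight w) (grad (u \- phi n))) @ \oo --> 0%:E.
Proof.
have := cvgeZl (y := 2%:E) isT phi_cvg; rewrite mule0 => phi_cvg2.
apply: (squeeze_cvge (f := fun=> 0%E) _ (cvg_cst _) phi_cvg2).
apply: nearW => n; rewrite L2norm2_ge0//= => [|e]; last exact: edge_weight_ge0.
have halfK : 1%E = (2%:E * (2^-1)%:E)%E :> \bar R by rewrite -EFinM divff.
rewrite form_norm2E L2norm2_zero_potential adde0 -[X in (X <= _)%E]mul1e halfK -muleA.
by rewrite lee_wpmul2l// leeDl// L2norm2_ge0.
Qed.

Let error_L2_cvg0 : (fun n => L2norm2 mu (u \- phi n)) @ \oo --> 0%:E.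
Proof.
apply: (squeeze_cvge (f := fun=> 0%E) _ (cvg_cst _) phi_cvg).
apply: nearW => n; rewrite L2norm2_ge0//= form_norm2E leeDr//.
rewrite mule_ge0 ?lee_fin ?invr_ge0// adde_ge0 ?L2norm2_ge0//; first exact: edge_weight_ge0.
by move=> x; rewrite mul0r.
Qed.

Lemma clamped_error_L2_cvg0 : (fun n => L2norm2 mu (g n)) @ \oo --> 0%:E.
Proof.
apply: (squeeze_cvge (f := fun=> 0%E) _ (cvg_cst _) error_L2_cvg0).
apply: nearW => n; rewrite L2norm2_ge0//=; apply: le_esum => x _.
by rewrite lee_fin ler_wpM2r// clamp_sqr_le.
Qed.

Lemma clamped_error_cvg0 x : g^~ x @ \oo --> 0.
Proof. exact: L2norm2_cvg0_pointwise (mu_gt0 x) clamped_error_L2_cvg0. Qed.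

Lemma clamped_error_grad_cvg0 :
  (fun n => L2norm2 (edge_weight w) (grad (g n))) @ \oo --> 0%:E.
Proof.
apply: (L2norm2_dominated_cvg0 (k := 2) (k' := 2) (edge_weight_ge0 w_ge0) _ _
  u_grad error_grad_cvg0) => //.
- move=> [x y]; rewrite /grad /=.
  by have := cvgB (clamped_error_cvg0 x) (clamped_error_cvg0 y); rewrite subr0; exact.
move=> n [x y]; rewrite /grad /edge_weight /clamped_error /=.
have := clamp_sub_sqr_le (u x) (u y) (u x - phi n x) (u y - phi n y).
by have := w_ge0 x y; nra.
Qed.

Lemma clamped_error_potential_cvg0 :
  (fun n => L2norm2 (fun x => Pot x * mu x) (g n)) @ \oo --> 0%:E.
Proof.
have Pmu_ge0 x : 0 <= Pot x * mu x by rewrite mulr_ge0.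
apply: (L2norm2_dominated_cvg0 (k := 1) (k' := 0) (s := fun _ _ => 0) Pmu_ge0 _ _
  u_Pot _ clamped_error_cvg0) => //.
  by rewrite L2norm2_cst0//; exact: cvg_cst.
move=> n x; rewrite mul0r addr0 mul1r ler_wpM2r//.
by rewrite -[u x ^+ 2]real_normK ?num_real// clamp_sqr_le_bound.
Qed.

Lemma clamped_approximation_cvg :
  (fun n => form_norm2 w mu Pot (u \- (u \- g n))) @ \oo --> 0%:E.
Proof.
have -> : (fun n => form_norm2 w mu Pot (u \- (u \- g n))) =
    fun n => form_norm2 w mu Pot (g n).
  by apply/funext => n; congr form_norm2; apply/funext => x /=; rewrite opprB addrC subrK.
under eq_fun do rewrite form_norm2E.
rewrite (_ : 0%:E = (2^-1)%:E * (0%:E + 0%:E) + 0%:E)%E; last first.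
  by rewrite !adde0 mule0.
apply: cvgeD => //; last exact: clamped_error_L2_cvg0.
apply: cvgeZl => //; apply: cvgeD => //.
- exact: clamped_error_grad_cvg0.
- exact: clamped_error_potential_cvg0.
Qed.

End clamped_approximation.

Theorem lemma2p2 (R : realType) (V : countType) (w : V -> V -> R) (mu : V -> R)
    (Pot : V -> R) :
  simple_weighted_graph w mu ->
  (forall x, 0 <= Pot x) ->
  forall u : V -> R,
    formF w mu Pot u <-> (formF w mu (fun _ => 0) u /\ in_L2 (fun x => Pot x * mu x) u).
Proof.
move=> [_ [_ [w_ge0 [mu_gt0 _]]]] Pot_ge0 u.
have mu_ge0 x : 0 <= mu x by exact/ltW.
have zero_ge0 (x : V) : 0 <= (fun=> 0 : R) x by [].
split.
- move=> [uL2 [uE [phi [phi_Cc phi_cvg]]]].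
  have [u_grad u_Pot] := (energy_lty w_ge0 mu_ge0 u Pot_ge0).1 uE.
  split=> //; split=> //; split.
    by apply/(energy_lty w_ge0 mu_ge0 u zero_ge0); rewrite L2norm2_zero_potential ltry.
  exists phi; split=> //.
  apply: (squeeze_cvge (f := fun=> 0%E) _ (cvg_cst _) phi_cvg); apply: nearW => n.
  by rewrite form_norm2_ge0// form_norm2_le_potential.
- move=> [[uL2 [uE0 [phi [phi_Cc phi_cvg]]]] u_Pot].
  have [u_grad _] := (energy_lty w_ge0 mu_ge0 u zero_ge0).1 uE0.
  split=> //; split; first exact/(energy_lty w_ge0 mu_ge0 u Pot_ge0).
  exists (fun n => u \- clamped_error u phi n); split.
  + exact: Cc_sub_clamped_error.
  + exact: clamped_approximation_cvg.
Qed.
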